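(* Let $\alpha,\beta,\gamma$ be independent random variables, and let $\hat\alpha,\hat\beta$ be random variables with the same distributions as $\alpha$ and $\beta$ respectively, such that $\alpha,\beta,\gamma,\hat\alpha,\hat\beta$ are mutually independent. Let $p(a|\beta,\gamma)$, $p(b|\alpha,\gamma)$, $p(c|\alpha,\beta)$ be arbitrary conditional distributions (response functions) with $a,b,c\in\{0,1\}$. Define $P_{obs}(a,b,c)=\mathbb E\,[p(a|\beta,\gamma)p(b|\alpha,\gamma)p(c|\alpha,\beta)]$, $P^{\beta}_{int}(a,b,c)=\mathbb E\,[p(a|\hat\beta,\gamma)p(b|\alpha,\gamma)p(c|\alpha,\beta)]$, $P^{\alpha}_{int}(a,b,c)=\mathbb E\,[p(a|\beta,\gamma)p(b|\hat\alpha,\gamma)p(c|\alpha,\beta)]$, $P^{\alpha\beta}_{int}(a,b,c)=\mathbb E\,[p(a|\hat\beta,\gamma)p(b|\hat\alpha,\gamma)p(c|\alpha,\beta)]$, the expectation being over $\alpha,\beta,\gamma,\hat\alpha,\hat\beta$. Set $E^1_{obs}=P_{obs}(a=b,c=1)-P_{obs}(a\neq b,c=1)$, $E^1_{\beta}=P^{\beta}_{int}(a=b,c=1)-P^{\beta}_{int}(a\neq b,c=1)$, $E^1_{\alpha}=P^{\alpha}_{int}(a=b,c=1)-P^{\alpha}_{int}(a\neq b,c=1)$, and $E_{\alpha\beta}=P^{\alpha\beta}_{int}(a=b)-P^{\alpha\beta}_{int}(a\neq b)$. Then $$S:=E_{\alpha\beta}\,P_{obs}(c=1)+2P_{obs}(c=1)-E^1_{obs}-E^1_{\alpha}-E^1_{\beta}\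 \ge\ 0.$$
   Context: This is the classical (local) triangle network with binary outputs: Alice's output $a$ depends on $(\beta,\gamma)$, Bob's $b$ on $(\alpha,\gamma)$, Charlie's $c$ on $(\alpha,\beta)$. The distributions $P^{\beta}_{int}$, $P^{\alpha}_{int}$, $P^{\alpha\beta}_{int}$ model ''latent splitting'' of the edges $\beta\to A$, $\alpha\to B$, or both: the affected party receives an independent copy of the source variable instead of the original one. Marginals such as $P(a=b,c=1)$ mean $\sum_{a=b}P(a,b,1)$. *)

From HB Require Import structures.
From mathcomp Require Import all_boot all_order all_algebra.
From mathcomp Require Import all_classical all_reals all_analysis.
Set Implicit Arguments. Unset Strict Implicit. Unset Printing Implicit Defensive.
Import Order.TTheory GRing.Theory Num.Theory.
Local Open Scope classical_set_scope.
Local Open Scope ring_scope.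

(* Expectation over the mutually independent variables
   alpha ~ PA, beta ~ PB, gamma ~ PG, alphahat ~ PA, betahat ~ PB,
   written as the iterated integral against the product of their laws. *)
Definition E5 (R : realType) (dA dB dG : measure_display)
  (A : measurableType dA) (B : measurableType dB) (G : measurableType dG)
  (PA : probability A R) (PB : probability B R) (PG : probability G R)
  (f : A -> B -> G -> A -> B -> R) : R :=
  Rintegral PA setT (fun al =>
  Rintegral PB setT (fun be =>
  Rintegral PG setT (fun ga =>
  Rintegral PA setT (fun ah =>
  Rintegral PB setT (fun bh => f al be ga ah bh))))).

(* A response function for a binary output depending on (x, y):
   a conditional distribution p(o | x, y), o in {0,1} (bool, true = 1),
   jointly measurable in (x, y). *)
Definition response (R : realType) (dX dY : measure_display)
  (X : measurableType dX) (Y : measurableType dY)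
  (p : bool -> X -> Y -> R) : Prop :=
  (forall o x y, 0 <= p o x y) /\
  (forall x y, p false x y + p true x y = 1) /\
  (forall o, measurable_fun [set: X * Y] (fun z : X * Y => p o z.1 z.2)).

From HB Require Import structures.
From mathcomp Require Import all_boot all_order all_algebra.
From mathcomp Require Import all_classical all_reals all_analysis.
From mathcomp Require Import measurable_realfun ring lra.
Import Order.TTheory GRing.Theory Num.Theory.
Local Open Scope classical_set_scope.
Local Open Scope ring_scope.

(* Write [spin q = q 0 - q 1] for the mean of (-1)^o under a response q;
   it lies in [-1, 1].  With u, x, v, y the spins of pA(. | beta, gamma),
   pA(. | betahat, gamma), pB(. | alpha, gamma), pB(. | alphahat, gamma),
   one has E1obs = E[pC u v], E1alpha = E[pC u y], E1beta = E[pC x v] and,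
   since (gamma, alphahat, betahat) is independent of (alpha, beta),
   Eab P_obs(c = 1) = E[pC x y], where pC = pC(1 | alpha, beta).  Hence
   S = E[pC (2 + x y - u v - u y - x v)], and this polynomial is nonnegative
   on [-1, 1]^4 since it is affine in u and nonnegative at u = 1 and u = -1. *)

Definition bounded_measurable {R : realType} {d : measure_display}
    {T : measurableType d} (f : T -> R) : Prop :=
  measurable_fun setT f /\ exists M : R, forall t, `|f t| <= M.

Section bounded_measurable.
Context {R : realType} {d : measure_display} {T : measurableType d}.
Implicit Types f g : T -> R.

Lemma bounded_measurable_cst (k : R) : bounded_measurable (fun _ : T => k).
Proof. by split; [exact: measurable_cst | exists `|k|]. Qed.

Lemma bounded_measurableD f g : bounded_measurable f -> bounded_measurable g ->
  bounded_measurable (fun t => f t + g t).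
Proof.
move=> [mf [M fM]] [mg [N gN]]; split; first exact: measurable_funD.
by exists (M + N) => t; apply: le_trans (ler_normD _ _) (lerD (fM t) (gN t)).
Qed.

Lemma bounded_measurableB f g : bounded_measurable f -> bounded_measurable g ->
  bounded_measurable (fun t => f t - g t).
Proof.
move=> [mf [M fM]] [mg [N gN]]; split; first exact: measurable_funB.
by exists (M + N) => t; apply: le_trans (ler_normB _ _) (lerD (fM t) (gN t)).
Qed.

Lemma bounded_measurableM f g : bounded_measurable f -> bounded_measurable g ->
  bounded_measurable (fun t => f t * g t).
Proof.
move=> [mf [M fM]] [mg [N gN]]; split; first exact: measurable_funM.
exists (M * N) => t; rewrite normrM.
by apply: ler_pM => //; exact: le_trans (normr_ge0 _) (fM t).
Qed.

Lemma bounded_measurable_comp {d'} {S : measurableType d'} f (h : S -> T) :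
  bounded_measurable f -> measurable_fun setT h -> bounded_measurable (f \o h).
Proof.
by move=> [mf [M fM]] mh; split; [exact: measurableT_comp | exists M => s; exact: fM].
Qed.

Variable P : probability T R.

Let P_setT : ((P : measure T R) setT = 1)%E := probability_setT P.

Lemma Rintegral_probability_cst (k : R) : Rintegral P setT (fun _ => k) = k.
Proof. by rewrite Rintegral_cst // P_setT mulr1. Qed.

Lemma bounded_measurable_integrable f :
  bounded_measurable f -> P.-integrable setT (EFin \o f).
Proof.
move=> [mf [M fM]]; apply: measurable_bounded_integrable => //.
  by rewrite P_setT ltry.
exists M; split; first by rewrite num_real.
by move=> M' MM' t _; apply: le_trans (fM t) (ltW MM').
Qed.

Lemma normr_Rintegral_le f M : measurable_fun setT f ->
  (forall t, `|f t| <= M) -> `|Rintegral P setT f| <= M.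
Proof.
move=> mf fM; have bf : bounded_measurable f by split; last exists M.
apply: le_trans (le_normr_Rintegral _ _) _ => //; first exact: bounded_measurable_integrable.
rewrite -[leRHS](Rintegral_probability_cst M); apply: le_Rintegral => //.
- apply: bounded_measurable_integrable; split; first exact: measurableT_comp.
  by exists M => t; rewrite normr_id.
- exact: bounded_measurable_integrable (bounded_measurable_cst M).
Qed.

End bounded_measurable.

Section partial_integral.
Context {R : realType} {d1 d2 : measure_display}.
Context {X : measurableType d1} {Y : measurableType d2}.
Variable P : probability Y R.
Implicit Types F G : X * Y -> R.

Definition int_snd F (x : X) : R := Rintegral P setT (fun y => F (x, y)).

Lemma bounded_measurable_section F x :
  bounded_measurable F -> bounded_measurable (fun y => F (x, y)).
Proof.
by move=> [mF [M FM]]; split; [exact: measurable_fun_pair2 | exists M].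
Qed.

Lemma int_snd_fst (h : X -> R) : int_snd (fun z => h z.1) = h.
Proof. by apply/funext => x; exact: (Rintegral_probability_cst P (h x)). Qed.

Lemma int_snd_mull (c : X -> R) F : bounded_measurable F ->
  int_snd (fun z => c z.1 * F z) = fun x => c x * int_snd F x.
Proof.
move=> bF; apply/funext => x; rewrite /int_snd /=; apply: RintegralZl => //.
exact/bounded_measurable_integrable/bounded_measurable_section.
Qed.

Lemma int_snd_mulr (c : X -> R) F : bounded_measurable F ->
  int_snd (fun z => F z * c z.1) = fun x => int_snd F x * c x.
Proof.
move=> bF; under eq_fun do rewrite mulrC.
by rewrite int_snd_mull //; apply/funext => x; rewrite mulrC.
Qed.

Lemma int_sndD F G : bounded_measurable F -> bounded_measurable G ->
  int_snd (fun z => F z + G z) = fun x => int_snd F x + int_snd G x.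
Proof.
move=> bF bG; apply/funext => x.
apply: (RintegralD (f1 := fun y => F (x, y)) (f2 := fun y => G (x, y))) => //;
  exact/bounded_measurable_integrable/bounded_measurable_section.
Qed.

Lemma int_snd_ge0 F : (forall z, 0 <= F z) -> forall x, 0 <= int_snd F x.
Proof. by move=> F0 x; apply: Rintegral_ge0. Qed.

(* Tonelli only gives measurability of partial integrals of nonnegative
   functions, so [F] is first shifted by its bound. *)
Lemma measurable_int_snd F : bounded_measurable F -> measurable_fun setT (int_snd F).
Proof.
move=> bF; have [mF [M FM]] := bF.
have FM0 z : (0 <= (F z + M)%:E)%E.
  by rewrite lee_fin; have := FM z; rewrite ler_norml; lra.
have -> : int_snd F = int_snd (fun z => F z + M) \- cst M.
  rewrite int_sndD //; last exact: bounded_measurable_cst.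
  by rewrite (int_snd_fst (fun _ => M)); apply/funext => x /=; rewrite addrK.
have mFM : measurable_fun setT (EFin \o (fun z => F z + M)).
  by apply/measurable_EFinP; apply: measurable_funD.
apply: measurable_funB => //.
exact: measurableT_comp (fine_measurable measurableT)
  (measurable_fun_fubini_tonelli_F (m2 := P) _ mFM FM0).
Qed.

Lemma bounded_measurable_int_snd F :
  bounded_measurable F -> bounded_measurable (int_snd F).
Proof.
move=> bF; split; first exact: measurable_int_snd.
have [mF [M FM]] := bF; exists M => x.
by apply: normr_Rintegral_le => //; exact: measurable_fun_pair2.
Qed.

End partial_integral.

Section response.
Context {R : realType} {d1 d2 : measure_display}.
Context {X : measurableType d1} {Y : measurableType d2}.
Context {p : bool -> X -> Y -> R}.
Hypothesis hp : response p.

Lemma response_spin_bounds x y : -1 <= p false x y - p true x y <= 1.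
Proof.
have [p0 [p1 _]] := hp; have := p0 false x y; have := p0 true x y.
by have := p1 x y; lra.
Qed.

Lemma bounded_measurable_response {d} {T : measurableType d} o (s : T -> X) (t : T -> Y) :
  measurable_fun setT s -> measurable_fun setT t ->
  bounded_measurable (fun w => p o (s w) (t w)).
Proof.
have [p0 [p1 mp]] := hp; move=> ms mt.
apply: (bounded_measurable_comp (fun z : X * Y => p o z.1 z.2) (fun w => (s w, t w))).
  split; first exact: mp.
  exists 1 => z; rewrite ger0_norm //; have := p0 (~~ o) z.1 z.2; have := p1 z.1 z.2.
  by case: o => /=; lra.
exact: measurable_fun_pair.
Qed.

End response.

Definition spin {R : zmodType} {T : Type} (q : bool -> T -> R) (t : T) : R :=
  q false t - q true t.

Definition correlator {R : zmodType} (P : bool -> bool -> bool -> R) (c : bool) : R :=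
  (P false false c + P true true c) - (P false true c + P true false c).

Lemma correlation_polynomial_ge0 {R : realFieldType} {u x v y : R} :
  -1 <= u <= 1 -> -1 <= x <= 1 -> -1 <= v <= 1 -> -1 <= y <= 1 ->
  0 <= 2 + x * y - u * v - u * y - x * v.
Proof.
move=> /andP[u1 u2] /andP[x1 x2] /andP[v1 v2] /andP[y1 y2].
(* interpolation between the values at u = 1 and at u = -1 *)
have -> : 2 + x * y - u * v - u * y - x * v =
  ((1 + u) * ((1 - v) * (1 + x) + (1 - x) * (1 - y)) +
   (1 - u) * ((1 + v) * (1 - x) + (1 + x) * (1 + y))) / 2 by field.
apply: divr_ge0 => //; apply: addr_ge0; apply: mulr_ge0; try lra.
all: by apply: addr_ge0; apply: mulr_ge0; lra.
Qed.

Ltac solve_measurable_projection :=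
  repeat first [done | apply: measurable_fun_pair | apply: measurableT_comp].

Ltac solve_bounded_measurable :=
  match goal with
  | |- bounded_measurable _ =>
      repeat first [ assumption | apply: bounded_measurable_cst
                   | apply: bounded_measurableB | apply: bounded_measurableD
                   | apply: bounded_measurableM
                   | match goal with H : forall o, bounded_measurable _ |- _ => apply: H end
                   | apply: bounded_measurable_int_snd ]
  end.

Section expectation.
Context {R : realType} {dA dB dG : measure_display}.
Context {A : measurableType dA} {B : measurableType dB} {G : measurableType dG}.
Variables (PA : probability A R) (PB : probability B R) (PG : probability G R).

(* A sample is [w = ((((alpha, beta), gamma), alphahat), betahat)]. *)
Local Notation Omega := ((((A * B) * G) * A) * B)%type.
Implicit Types F H : Omega -> R.

Definition expect F : R :=
  Rintegral PA setT (int_snd PB (int_snd PG (int_snd PA (int_snd PB F)))).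

Lemma eq_expect F H : F =1 H -> expect F = expect H.
Proof. by move=> /funext ->. Qed.

Lemma expectD F H : bounded_measurable F -> bounded_measurable H ->
  expect (fun w => F w + H w) = expect F + expect H.
Proof.
move=> bF bH; rewrite /expect !int_sndD; try by solve_bounded_measurable.
apply: RintegralD => //; apply: bounded_measurable_integrable;
  by solve_bounded_measurable.
Qed.

Lemma expectZ k F : bounded_measurable F -> expect (fun w => k * F w) = k * expect F.
Proof.
move=> bF; rewrite /expect !int_snd_mull; try by solve_bounded_measurable.
apply: RintegralZl => //; apply: bounded_measurable_integrable.
by solve_bounded_measurable.
Qed.

Lemma expectB F H : bounded_measurable F -> bounded_measurable H ->
  expect (fun w => F w - H w) = expect F - expect H.
Proof.
move=> bF bH; have -> : expect F - expect H = expect F + (-1) * expect H.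
  by rewrite mulN1r.
have bH' : bounded_measurable (fun w => -1 * H w).
  exact: bounded_measurableM (bounded_measurable_cst _) bH.
rewrite -(expectZ _ _ bH) -(expectD _ _ bF bH').
by apply: eq_expect => w; rewrite mulN1r.
Qed.

Lemma expect_ge0 F : (forall w, 0 <= F w) -> 0 <= expect F.
Proof.
move=> F0; apply: Rintegral_ge0 => al _.
by do 4 (apply: int_snd_ge0 => ?); exact: F0.
Qed.

Lemma expect_mul_indep (c : A * B -> R) (h : (G * A) * B -> R) :
  bounded_measurable c -> bounded_measurable h ->
  expect (fun w => c w.1.1.1 * h (w.1.1.2, w.1.2, w.2)) =
  expect (fun w => c w.1.1.1) * expect (fun w => h (w.1.1.2, w.1.2, w.2)).
Proof.
move=> bc bh; pose K := Rintegral PG setT (int_snd PA (int_snd PB h)).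
have bh' : bounded_measurable (fun w : Omega => h (w.1.1.2, w.1.2, w.2)).
  apply: (bounded_measurable_comp h (fun w : Omega => (w.1.1.2, w.1.2, w.2))) => //.
  by solve_measurable_projection.
have innerE : int_snd PG (int_snd PA (int_snd PB
    (fun w : Omega => h (w.1.1.2, w.1.2, w.2)))) = fun _ => K by [].
have -> : expect (fun w => c w.1.1.1) = Rintegral PA setT (int_snd PB c).
  by rewrite /expect (int_snd_fst _ (fun z => c z.1.1)) (int_snd_fst _ (fun z => c z.1))
    int_snd_fst.
have -> : expect (fun w => h (w.1.1.2, w.1.2, w.2)) = K.
  by rewrite /expect innerE (int_snd_fst _ (fun _ => K)) Rintegral_probability_cst.
rewrite /expect (int_snd_mull _ (fun z => c z.1.1) _ bh').
rewrite (int_snd_mull _ (fun z => c z.1)); last by solve_bounded_measurable.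
rewrite (int_snd_mull _ c); last by solve_bounded_measurable.
rewrite innerE (int_snd_mulr _ (fun _ => K) _ bc).
apply: RintegralZr => //; apply: bounded_measurable_integrable.
by solve_bounded_measurable.
Qed.

Definition joint (qA qB qC : bool -> Omega -> R) (a b c : bool) : R :=
  expect (fun w => qA a w * qB b w * qC c w).

Section binary_outputs.
Context {qA qB qC : bool -> Omega -> R}.
Hypotheses (bqA : forall o, bounded_measurable (qA o))
  (bqB : forall o, bounded_measurable (qB o))
  (bqC : forall o, bounded_measurable (qC o)).

Lemma joint_marginal :
  (forall w, qA false w + qA true w = 1) -> (forall w, qB false w + qB true w = 1) ->
  forall c, \sum_(a : bool) \sum_(b : bool) joint qA qB qC a b c = expect (qC c).
Proof.
move=> sA sB c.
have sum4 (P : bool -> bool -> bool -> R) : \sum_(a : bool) \sum_(b : bool) P a b c =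
    P true true c + P true false c + (P false true c + P false false c).
  by rewrite !big_bool.
rewrite sum4 /joint -[X in X + _ = _]expectD; try by solve_bounded_measurable.
rewrite -[X in _ + X = _]expectD; try by solve_bounded_measurable.
rewrite -expectD; try by solve_bounded_measurable.
apply: eq_expect => w.
transitivity ((qA false w + qA true w) * (qB false w + qB true w) * qC c w); first ring.
by rewrite sA sB !mul1r.
Qed.

Lemma correlator_joint c : correlator (joint qA qB qC) c =
  expect (fun w => spin qA w * spin qB w * qC c w).
Proof.
rewrite /correlator /joint -[X in X - _ = _]expectD; try by solve_bounded_measurable.
rewrite -[X in _ - X = _]expectD; try by solve_bounded_measurable.
rewrite -expectB; try by solve_bounded_measurable.
by apply: eq_expect => w; rewrite /spin; ring.
Qed.

Lemma sum_correlator_joint : (forall w, qC false w + qC true w = 1) ->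
  \sum_(c : bool) correlator (joint qA qB qC) c = expect (fun w => spin qA w * spin qB w).
Proof.
move=> sC; rewrite big_bool /= 2!correlator_joint -expectD; try by solve_bounded_measurable.
by apply: eq_expect => w; rewrite -mulrDr addrC sC mulr1.
Qed.

End binary_outputs.

Definition respA (p : bool -> B -> G -> R) o (w : Omega) : R := p o w.1.1.1.2 w.1.1.2.
Definition respAhat (p : bool -> B -> G -> R) o (w : Omega) : R := p o w.2 w.1.1.2.
Definition respB (p : bool -> A -> G -> R) o (w : Omega) : R := p o w.1.1.1.1 w.1.1.2.
Definition respBhat (p : bool -> A -> G -> R) o (w : Omega) : R := p o w.1.2 w.1.1.2.
Definition respC (p : bool -> A -> B -> R) o (w : Omega) : R := p o w.1.1.1.1 w.1.1.1.2.

Section triangle.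
Context {pA : bool -> B -> G -> R} {pB : bool -> A -> G -> R} {pC : bool -> A -> B -> R}.
Hypotheses (hA : response pA) (hB : response pB) (hC : response pC).

Lemma bounded_measurable_respA o : bounded_measurable (respA pA o).
Proof. by apply: bounded_measurable_response; solve_measurable_projection. Qed.

Lemma bounded_measurable_respAhat o : bounded_measurable (respAhat pA o).
Proof. by apply: bounded_measurable_response; solve_measurable_projection. Qed.

Lemma bounded_measurable_respB o : bounded_measurable (respB pB o).
Proof. by apply: bounded_measurable_response; solve_measurable_projection. Qed.

Lemma bounded_measurable_respBhat o : bounded_measurable (respBhat pB o).
Proof. by apply: bounded_measurable_response; solve_measurable_projection. Qed.

Lemma bounded_measurable_respC o : bounded_measurable (respC pC o).
Proof. by apply: bounded_measurable_response; solve_measurable_projection. Qed.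

Lemma expect_hat_indep :
  expect (fun w => spin (respAhat pA) w * spin (respBhat pB) w) * expect (respC pC true) =
  expect (fun w => respC pC true w * (spin (respAhat pA) w * spin (respBhat pB) w)).
Proof.
rewrite mulrC; symmetry.
apply: (expect_mul_indep (fun ab => pC true ab.1 ab.2)
  (fun z => (pA false z.2 z.1.1 - pA true z.2 z.1.1) *
            (pB false z.1.2 z.1.1 - pB true z.1.2 z.1.1))).
  by apply: bounded_measurable_response; solve_measurable_projection.
apply: bounded_measurableM; apply: bounded_measurableB;
  by apply: bounded_measurable_response; solve_measurable_projection.
Qed.

Lemma triangle_expect_ge0 :
  0 <= expect (fun w => spin (respAhat pA) w * spin (respBhat pB) w) * expect (respC pC true)
       + 2 * expect (respC pC true)
       - expect (fun w => spin (respA pA) w * spin (respB pB) w * respC pC true w)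
       - expect (fun w => spin (respA pA) w * spin (respBhat pB) w * respC pC true w)
       - expect (fun w => spin (respAhat pA) w * spin (respB pB) w * respC pC true w).
Proof.
have bA := bounded_measurable_respA; have bAh := bounded_measurable_respAhat.
have bB := bounded_measurable_respB; have bBh := bounded_measurable_respBhat.
have bC := bounded_measurable_respC.
rewrite expect_hat_indep -[X in 0 <= _ + X - _ - _ - _]expectZ;
  try by solve_bounded_measurable.
rewrite -[X in 0 <= X - _ - _ - _]expectD; try by solve_bounded_measurable.
rewrite -[X in 0 <= X - _ - _]expectB; try by solve_bounded_measurable.
rewrite -[X in 0 <= X - _]expectB; try by solve_bounded_measurable.
rewrite -expectB; try by solve_bounded_measurable.
apply: expect_ge0 => w.
have := mulr_ge0 (hC.1 true w.1.1.1.1 w.1.1.1.2) (correlation_polynomial_ge0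
  (response_spin_bounds hA w.1.1.1.2 w.1.1.2) (response_spin_bounds hA w.2 w.1.1.2)
  (response_spin_bounds hB w.1.1.1.1 w.1.1.2) (response_spin_bounds hB w.1.2 w.1.1.2)).
rewrite /spin /respA /respAhat /respB /respBhat /respC; lra.
Qed.

End triangle.
End expectation.

Theorem mainTheorem2 (R : realType) (dA dB dG : measure_display)
  (A : measurableType dA) (B : measurableType dB) (G : measurableType dG)
  (PA : probability A R) (PB : probability B R) (PG : probability G R)
  (pA : bool -> B -> G -> R) (pB : bool -> A -> G -> R) (pC : bool -> A -> B -> R)
  (hA : response pA) (hB : response pB) (hC : response pC) :
  let Pobs := fun a b c => E5 PA PB PG
        (fun al be ga ah bh => pA a be ga * pB b al ga * pC c al be) in
  let Pbeta := fun a b c => E5 PA PB PG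
        (fun al be ga ah bh => pA a bh ga * pB b al ga * pC c al be) in
  let Palpha := fun a b c => E5 PA PB PG
        (fun al be ga ah bh => pA a be ga * pB b ah ga * pC c al be) in
  let Palphabeta := fun a b c => E5 PA PB PG
        (fun al be ga ah bh => pA a bh ga * pB b ah ga * pC c al be) in
  (* E^1 := P(a = b, c = 1) - P(a <> b, c = 1) *)
  let E1 := fun P : bool -> bool -> bool -> R =>
        (P false false true + P true true true)
        - (P false true true + P true false true) in
  let E1obs := E1 Pobs in
  let E1beta := E1 Pbeta in
  let E1alpha := E1 Palpha in
  (* E_{alpha beta} := P(a = b) - P(a <> b), marginalizing over c *)
  let Eab := \sum_(c : bool)
        ((Palphabeta false false c + Palphabeta true true c)
         - (Palphabeta false true c + Palphabeta true false c)) in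
  let Pobs_c1 := \sum_(a : bool) \sum_(b : bool) Pobs a b true in
  0 <= Eab * Pobs_c1 + 2 * Pobs_c1 - E1obs - E1alpha - E1beta.
Proof.
have := triangle_expect_ge0 PA PB PG hA hB hC.
rewrite -(joint_marginal PA PB PG (bounded_measurable_respA hA) (bounded_measurable_respB hB)
  (bounded_measurable_respC hC) (fun w => hA.2.1 _ _) (fun w => hB.2.1 _ _) true).
rewrite -(sum_correlator_joint PA PB PG (bounded_measurable_respAhat hA)
  (bounded_measurable_respBhat hB) (bounded_measurable_respC hC) (fun w => hC.2.1 _ _)).
rewrite -(correlator_joint PA PB PG (bounded_measurable_respA hA)
  (bounded_measurable_respB hB) (bounded_measurable_respC hC) true).
rewrite -(correlator_joint PA PB PG (bounded_measurable_respA hA)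
  (bounded_measurable_respBhat hB) (bounded_measurable_respC hC) true).
rewrite -(correlator_joint PA PB PG (bounded_measurable_respAhat hA)
  (bounded_measurable_respB hB) (bounded_measurable_respC hC) true).
exact.
Qed.
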